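(* Let $P\subset\mathbb{R}^d$ be a polytope inscribed into a sphere centered at the origin and let $v$ be a vertex of $P$. Then the neighbors of $v$ in the graph of $P$ are exactly the points $s_W(v)$, where $W$ ranges over the walls of the normal cone $N_vP$.
   Context: The normal cone of a vertex $v$ is $N_vP=\{c\in\mathbb{R}^d: \langle c,v\rangle\ge\langle c,y\rangle \ \forall y\in P\}$. In the (full-dimensional) normal fan of $P$, a wall is a cone of dimension $d-1$; a wall of $N_vP$ is a $(d-1)$-dimensional face of it. For a wall $W$ with linear span $\{x:\langle\alpha,x\rangle=0\}$, $s_W(x)=x-2\frac{\langle\alpha,x\rangle}{\langle\alpha,\alpha\rangle}\alpha$ is the reflection in that hyperplane. *)

From HB Require Import structures.
From mathcomp Require Import all_boot all_order all_algebra.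
Set Implicit Arguments. Unset Strict Implicit. Unset Printing Implicit Defensive.
Import Order.TTheory GRing.Theory Num.Theory.
Local Open Scope ring_scope.

Section Defs.
Variables (R : realFieldType) (d : nat).
Notation vec := 'rV[R]_d.

Definition dot (u w : vec) : R := \sum_(i < d) u 0 i * w 0 i.

Definition conv (V : seq vec) (x : vec) : Prop :=
  exists lam : 'I_(size V) -> R,
    (forall i, 0 <= lam i) /\ \sum_i lam i = 1 /\ x = \sum_i lam i *: V`_i.

(* F is a face of the convex set K: intersection of K with a supporting
   (weakly valid) hyperplane {x | <c,x> = b}, where <c,y> <= b on K
   (c = 0 allowed, giving K itself or the empty face). *)
Definition is_face (K F : vec -> Prop) : Prop :=
  exists (c : vec) (b : R),
    (forall y, K y -> dot c y <= b) /\
    (forall x, F x <-> (K x /\ dot c x = b)).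

Definition is_vertex (P : vec -> Prop) (v : vec) : Prop :=
  is_face P (fun x => x = v).

Definition neighbor (P : vec -> Prop) (v w : vec) : Prop :=
  w <> v /\ is_face P (conv [:: v; w]).

Definition inscribed (P : vec -> Prop) : Prop :=
  exists r : R, 0 < r /\ forall x, is_vertex P x -> dot x x = r ^+ 2.

Definition normal_cone (P : vec -> Prop) (v : vec) (c : vec) : Prop :=
  forall y, P y -> dot c y <= dot c v.

(* (affine) dimension: A has dimension k iff A is nonempty, contains k+1
   affinely independent points, and no more *)
Definition affdim (A : vec -> Prop) (k : nat) : Prop :=
  (exists a0, A a0 /\ exists s : seq vec,
      size s = k /\ (forall x, x \in s -> A (a0 + x)) /\ free s) /\
  (forall a0 (s : seq vec), A a0 -> (forall x, x \in s -> A (a0 + x)) ->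
      free s -> (size s <= k)%N).

Definition is_wall (C W : vec -> Prop) : Prop :=
  is_face C W /\ exists k, affdim W k /\ k.+1 = d.

Definition lspan (A : vec -> Prop) (x : vec) : Prop :=
  exists s : seq vec, (forall y, y \in s -> A y) /\ x \in <<s>>%VS.

Definition refl (alpha x : vec) : vec :=
  x - (2 * dot alpha x / dot alpha alpha) *: alpha.

End Defs.

(* If [v, w] is an edge, cut out by the functional c, then c can be moved slightly in
   every direction orthogonal to w - v without leaving N_vP; hence N_vP meets the
   hyperplane (w - v)^perp in a wall W. Conversely, a generic functional c of a
   wall W (normal vector alpha) cuts out a face of P at v lying on the line
   v + R alpha, and this face is not {v}: otherwise c + e alpha and c - e alpha
   would both be normal at v, which puts c + e alpha in W although it is not
   orthogonal to alpha. So the face is an edge [v, u]. In both directions u and v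
   lie on the sphere and u - v is parallel to alpha, which forces u = s_W(v). *)

From mathcomp Require Import all_boot all_order all_algebra.
From mathcomp Require Import ring lra.
From Stdlib Require Import Classical.

Set Implicit Arguments. Unset Strict Implicit. Unset Printing Implicit Defensive.
Import Order.TTheory GRing.Theory Num.Theory.
Local Open Scope ring_scope.

Section InscribedPolytope.
Variables (R : realFieldType) (d : nat).
Notation vec := 'rV[R]_d.
Implicit Types (V : seq vec) (a b c u v w x y z : vec).

Lemma dotE u w : dot u w = (u *m w^T) 0 0.
Proof. by rewrite /dot mxE; apply: eq_bigr => i _; rewrite mxE. Qed.

Lemma dotC u w : dot u w = dot w u.
Proof. by rewrite /dot; apply: eq_bigr => i _; rewrite mulrC. Qed.

Lemma dotDr u x y : dot u (x + y) = dot u x + dot u y.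
Proof. by rewrite /dot -big_split; apply: eq_bigr => i _; rewrite mxE mulrDr. Qed.

Lemma dotZr u k x : dot u (k *: x) = k * dot u x.
Proof. by rewrite /dot mulr_sumr; apply: eq_bigr => i _; rewrite mxE mulrCA. Qed.

Lemma dotNr u x : dot u (- x) = - dot u x.
Proof. by rewrite -scaleN1r dotZr mulN1r. Qed.

Lemma dotBr u x y : dot u (x - y) = dot u x - dot u y.
Proof. by rewrite dotDr dotNr. Qed.

Lemma dot0r u : dot u 0 = 0.
Proof. by rewrite -(scale0r 0) dotZr mul0r. Qed.

Lemma dotDl u x y : dot (x + y) u = dot x u + dot y u.
Proof. by rewrite !(dotC _ u) dotDr. Qed.

Lemma dotZl u k x : dot (k *: x) u = k * dot x u.
Proof. by rewrite !(dotC _ u) dotZr. Qed.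

Lemma dotNl u x : dot (- x) u = - dot x u.
Proof. by rewrite !(dotC _ u) dotNr. Qed.

Lemma dotBl u x y : dot (x - y) u = dot x u - dot y u.
Proof. by rewrite !(dotC _ u) dotBr. Qed.

Lemma dot0l u : dot 0 u = 0.
Proof. by rewrite dotC dot0r. Qed.

Lemma dot_sumr (I : finType) u (F : I -> vec) :
  dot u (\sum_i F i) = \sum_i dot u (F i).
Proof. by elim/big_rec2: _ => [|i y1 y2 _ <-]; rewrite ?dot0r ?dotDr. Qed.

Lemma dot_eq0 x : (dot x x == 0) = (x == 0).
Proof.
apply/idP/eqP => [|->]; last by rewrite dot0r.
rewrite /dot psumr_eq0 => [/allP x0|i _]; last by rewrite -expr2 sqr_ge0.
apply/rowP => i; rewrite mxE.
by have := x0 i (mem_index_enum i); rewrite /= mulf_eq0 orbb => /eqP.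
Qed.

Lemma dot_gt0 x : x != 0 -> 0 < dot x x.
Proof.
move=> x0; rewrite lt_def dot_eq0 x0 /dot.
by apply: sumr_ge0 => i _; rewrite -expr2 sqr_ge0.
Qed.

Lemma rV_neq0_dim_gt0 a : a != 0 -> (0 < d)%N.
Proof.
by case: (posnP d) => // d0; case/eqP; apply/rowP => i; have := ltn_ord i; rewrite {2}d0.
Qed.

Definition orth_form a : 'Hom(vec, 'M[R]_1) := linfun (mulmxr a^T).

Definition orthv a := lker (orth_form a).

Lemma memv_orth a x : (x \in orthv a) = (dot a x == 0).
Proof.
rewrite memv_ker lfunE /= dotC dotE; apply/eqP/eqP => [->|ax]; first by rewrite mxE.
by apply/matrixP => i j; rewrite !ord1 ax mxE.
Qed.

Lemma dim_orthv a : a != 0 -> \dim (orthv a) = d.-1.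
Proof.
move=> a0; have := limg_ker_dim (orth_form a) fullv.
rewrite capfv dimvf dim_matrix -/(orthv a).
suff -> : \dim (orth_form a @: fullv) = 1%N.
  by rewrite mul1r addn1 => dimE; rewrite -[in RHS]dimE.
apply/eqP; rewrite eqn_leq; apply/andP; split.
  by have := dimvS (subvf (orth_form a @: fullv)); rewrite dimvf dim_matrix.
rewrite lt0n dimv_eq0; apply: contraTneq (memv_img (orth_form a) (memvf a)).
by move=> ->; rewrite memv0 -memv_ker memv_orth gt_eqF ?dot_gt0.
Qed.

Lemma span_orth a (s : seq vec) x :
  (forall y, y \in s -> dot a y = 0) -> x \in <<s>>%VS -> dot a x = 0.
Proof.
move=> s_orth /(subvP (_ : <<s>> <= orthv a)%VS) xa.
by apply/eqP; rewrite -memv_orth xa //; apply/span_subvP => y /s_orth/eqP; rewrite memv_orth.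
Qed.

Lemma orth_orth_colinear a x : a != 0 ->
  (forall y, dot a y = 0 -> dot x y = 0) -> x = (dot a x / dot a a) *: a.
Proof.
move=> a0 ax; have aa : dot a a != 0 by rewrite gt_eqF ?dot_gt0.
set y := x - (dot a x / dot a a) *: a.
have ay : dot a y = 0 by rewrite /y dotBr dotZr; field.
have yy : dot y y = 0 by rewrite {1}/y dotBl dotZl ax // dotC ay mulr0 subr0.
by apply/eqP; rewrite -subr_eq0 -/y -dot_eq0 yy.
Qed.

Lemma span_scale (X : seq vec) (e : R) : e != 0 ->
  <<map (fun x => e *: x) X>>%VS = <<X>>%VS.
Proof.
move=> e0; apply/eqP; rewrite eqEsubv; apply/andP; split; apply/span_subvP => x.
  by move=> /mapP [y yX ->]; rewrite rpredZ // memv_span.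
move=> xX; rewrite -[x](scalerK e0) rpredZ // memv_span //.
by apply/mapP; exists x.
Qed.

Lemma small_perturbation (T : eqType) (l : seq T) (f g : T -> R) :
  (forall t, t \in l -> f t < 0) ->
  exists2 e, 0 < e & forall t, t \in l -> f t + e * g t < 0.
Proof.
move=> f_lt0.
suff [e e_gt0 small] : exists2 e, 0 < e & forall t, t \in l -> e * `|g t| < - f t.
  exists e => // t /small lt.
  by have := ler_wpM2l (ltW e_gt0) (ler_norm (g t)); lra.
elim: l f_lt0 => [|t l IHl] f_lt0; first by exists 1.
have [e e_gt0 small] := IHl (fun s sl => f_lt0 s (mem_behead (s := t :: l) sl)).
have ft_gt0 : 0 < - f t by rewrite oppr_gt0 f_lt0 ?mem_head.
have gt_gt0 : 0 < `|g t| + 1 by rewrite ltr_wpDl.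
set e' := Num.min e (- f t / (`|g t| + 1)).
have [le_e le_et] : e' <= e /\ e' <= - f t / (`|g t| + 1) by rewrite !ge_min !lexx ?orbT.
exists e'; first by rewrite lt_min e_gt0 divr_gt0.
move=> s; rewrite inE => /predU1P [->|sl].
  apply: le_lt_trans (ler_wpM2r (normr_ge0 _) le_et) _.
  by rewrite mulrAC ltr_pdivrMr // ltr_pM2l // ltrDl.
by apply: le_lt_trans (ler_wpM2r (normr_ge0 _) le_e) (small s sl).
Qed.

Lemma conv_of_mem V u : u \in V -> conv V u.
Proof.
move=> uV; pose j := Ordinal (etrans (index_mem u V) uV).
exists (fun i => (i == j)%:R); split; first by move=> i; rewrite ler0n.
split; first by rewrite (bigD1 j) //= eqxx big1 ?addr0 // => i /negPf ->.
rewrite (bigD1 j) //= eqxx scale1r big1 ?addr0 ?nth_index //.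
by move=> i /negPf ->; rewrite scale0r.
Qed.

Lemma conv_dot_le V c m x :
  (forall u, u \in V -> dot c u <= m) -> conv V x -> dot c x <= m.
Proof.
move=> c_le [lam [lam_ge0 [lam1 ->]]]; rewrite dot_sumr -[m]mul1r -lam1 mulr_suml.
by apply: ler_sum => i _; rewrite dotZr ler_wpM2l ?c_le ?mem_nth.
Qed.

Lemma conv_dot_const V c m x :
  (forall u, u \in V -> dot c u = m) -> conv V x -> dot c x = m.
Proof.
move=> cE Vx; apply/eqP; rewrite eq_le (conv_dot_le _ Vx) => [|u /cE -> //].
by rewrite -lerN2 -dotNl (conv_dot_le _ Vx) // => u /cE; rewrite dotNl => ->.
Qed.

Lemma conv_dot_eq V c m x :
  (forall u, u \in V -> dot c u <= m) -> conv V x -> dot c x = m ->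
  exists lam : 'I_(size V) -> R,
    [/\ forall i, 0 <= lam i, \sum_i lam i = 1, x = \sum_i lam i *: V`_i &
        forall i, lam i != 0 -> dot c V`_i = m].
Proof.
move=> c_le [lam [lam_ge0 [lam1 xE]]] cx; exists lam; split => // i lam_i.
have gap_ge0 j : 0 <= lam j * (m - dot c V`_j).
  by rewrite mulr_ge0 // subr_ge0 c_le // mem_nth.
have gap0 : \sum_j lam j * (m - dot c V`_j) = 0.
  rewrite (eq_bigr (fun j => lam j * m - dot c (lam j *: V`_j))) => [|j _].
    by rewrite sumrB -mulr_suml lam1 mul1r -dot_sumr -xE cx subrr.
  by rewrite dotZr mulrBr.
have /eqP := psumr_eq0P (fun j _ => gap_ge0 j) gap0 (i := i) isT.
by rewrite mulf_eq0 (negPf lam_i) subr_eq0 => /eqP <-.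
Qed.

Lemma conv_comb V n (lam : 'I_n -> R) (y : 'I_n -> vec) :
  (forall i, 0 <= lam i) -> \sum_i lam i = 1 ->
  (forall i, lam i != 0 -> conv V (y i)) -> conv V (\sum_i lam i *: y i).
Proof.
move=> lam_ge0 lam1 yV.
have mu_ex i : exists mu : 'I_(size V) -> R, lam i != 0 ->
    [/\ forall j, 0 <= mu j, \sum_j mu j = 1 & y i = \sum_j mu j *: V`_j].
  have [lam0|/yV [mu [mu_ge0 [mu1 ->]]]] := eqVneq (lam i) 0; last by exists mu.
  by exists (fun=> 0).
have [mu muP] := fin_all_exists mu_ex.
have lam0 i : lam i = 0 \/ lam i != 0 by case: eqVneq; [left | right].
exists (fun j => \sum_i lam i * mu i j); split; [|split].
- move=> j; apply: sumr_ge0 => i _.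
  by have [->|/muP[mu_ge0 _ _]] := lam0 i; rewrite ?mul0r // mulr_ge0.
- rewrite exchange_big -[RHS]lam1; apply: eq_bigr => i _ /=.
  have [->|/muP[_ mu1 _]] := lam0 i; last by rewrite -mulr_sumr mu1 mulr1.
  by rewrite big1 // => j _; rewrite mul0r.
- under [RHS]eq_bigr do rewrite scaler_suml.
  rewrite exchange_big; apply: eq_bigr => i _ /=.
  have [->|/muP[_ _ ->]] := lam0 i.
    by rewrite scale0r big1 // => j _; rewrite mul0r scale0r.
  by rewrite scaler_sumr; apply: eq_bigr => j _; rewrite scalerA.
Qed.

Lemma conv2P v w x :
  conv [:: v; w] x <-> exists2 t, 0 <= t <= 1 & x = v + t *: (w - v).
Proof.
have combE t : (1 - t) *: v + t *: w = v + t *: (w - v).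
  by rewrite scalerBr scalerBl scale1r addrA [RHS]addrAC.
split => [[lam [lam_ge0 [lam1 ->]]] | [t /andP [t_ge0 t_le1] ->]].
  move: lam1; rewrite !big_ord_recl !big_ord0 /= !addr0 => lam1.
  have -> : lam ord0 = 1 - lam (lift ord0 ord0) by rewrite -lam1 addrK.
  exists (lam (lift ord0 ord0)); last exact: combE.
  by rewrite lam_ge0 -lam1 /= lerDr lam_ge0.
exists (fun i : 'I_2 => if val i == 0%N then 1 - t else t).
rewrite !big_ord_recl !big_ord0 /= !addr0 subrK combE; split => //.
by move=> [[|i] ?] /=; rewrite ?subr_ge0.
Qed.

Lemma face_segment V c v w :
  conv V v -> conv V w -> (forall u, u \in V -> dot c u <= dot c v) ->
  dot c w = dot c v -> (forall u, u \in V -> dot c u = dot c v -> conv [:: v; w] u) ->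
  is_face (conv V) (conv [:: v; w]).
Proof.
move=> Vv Vw c_le cw tight; exists c, (dot c v); split => [y|x]; first exact: conv_dot_le.
split => [vwx | [Vx cx]].
  split; last by apply: conv_dot_const vwx => u; rewrite !inE => /predU1P [->|/eqP ->].
  have [lam [lam_ge0 [lam1 ->]]] := vwx.
  by apply: conv_comb => // -[[|[|//]] ?].
have [lam [lam_ge0 lam1 -> lam_tight]] := conv_dot_eq c_le Vx cx.
by apply: conv_comb => // i /lam_tight; apply: tight; rewrite mem_nth.
Qed.

Lemma vertex_conv V c z :
  conv V z -> (forall u, u \in V -> u != z -> dot c u < dot c z) -> is_vertex (conv V) z.
Proof.
move=> Vz c_lt; have c_le u : u \in V -> dot c u <= dot c z.
  by move=> uV; have [->|/(c_lt u uV)/ltW] := eqVneq u z.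
exists c, (dot c z); split => [y|x]; first exact: conv_dot_le.
split => [-> // | [Vx cx]].
have [lam [lam_ge0 lam1 -> lam_tight]] := conv_dot_eq c_le Vx cx.
rewrite -[z]scale1r -lam1 scaler_suml; apply: eq_bigr => i _.
have [->|/lam_tight cVi] := eqVneq (lam i) 0; first by rewrite !scale0r.
have [-> //|Viz] := eqVneq V`_i z.
by have := c_lt _ (mem_nth 0 (ltn_ord i)) Viz; rewrite cVi ltxx.
Qed.

Lemma vertex_of_ray V c b z :
  conv V z -> dot c b = 0 ->
  (forall u, u \in V -> dot c (u - z) < 0 \/ exists2 s, s <= 0 & u - z = s *: b) ->
  is_vertex (conv V) z.
Proof.
move=> Vz cb Vu.
have strict_lt0 u : u \in [seq u <- V | dot c (u - z) < 0] -> dot c (u - z) < 0.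
  by rewrite mem_filter => /andP [].
have [e e_gt0 He] := small_perturbation (fun u => dot b (u - z)) strict_lt0.
apply: (vertex_conv (c := c + e *: b)) => // u uV uz.
rewrite -subr_lt0 -dotBr dotDl dotZl.
have [lt | [s s_le0 uzE]] := Vu u uV; first by apply: He; rewrite mem_filter lt.
have : s *: b != 0 by rewrite -uzE subr_eq0.
rewrite scaler_eq0 negb_or => /andP [s0 b0].
rewrite uzE !dotZr cb mulr0 add0r pmulr_rlt0 // pmulr_llt0 ?dot_gt0 //.
by rewrite lt_neqAle s0.
Qed.

Lemma vertex_mem (P : vec -> Prop) v : is_vertex P v -> P v.
Proof. by case=> c [m [_ vE]]; have [] := iffLR (vE v) erefl. Qed.

Lemma vertex_not_inner (P : vec -> Prop) v b s t :
  is_vertex P v -> P (v + s *: b) -> P (v + t *: b) -> s < 0 -> 0 < t -> b = 0.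
Proof.
move=> [c [m [c_le vE]]] Ps Pt s_lt0 t_gt0.
have [_ cv] := iffLR (vE v) erefl.
have := c_le _ Ps; have := c_le _ Pt; rewrite !dotDr !dotZr cv => ct cs.
have cb : dot c b = 0.
  apply/eqP; rewrite eq_le -(pmulr_rle0 _ t_gt0) -(nmulr_rle0 _ s_lt0).
  by apply/andP; split; lra.
have /eqP : v + s *: b = v by apply/vE; rewrite dotDr dotZr cv cb mulr0 addr0.
by rewrite -subr_eq0 addrAC subrr add0r scaler_eq0 lt_eqF //= => /eqP.
Qed.

Lemma reflN a v : refl (- a) v = refl a v.
Proof. by rewrite /refl !dotNl dotNr opprK mulrN mulNr scaleNr scalerN opprK. Qed.

Lemma refl_sphere b v w t :
  dot v v = dot w w -> w - v = t *: b -> t != 0 -> refl b v = w.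
Proof.
move=> vw wvE t0; have wE : w = v + t *: b by rewrite -wvE addrC subrK.
rewrite /refl; have [b0|b0] := eqVneq b 0; first by rewrite wE b0 !scaler0 subr0 addr0.
have bb : dot b b != 0 by rewrite gt_eqF ?dot_gt0.
suff -> : 2 * dot b v / dot b b = - t by rewrite scaleNr opprK -wE.
have : t * (2 * dot b v + t * dot b b) = 0.
  move: vw; rewrite wE !dotDl !dotDr !dotZl !dotZr (dotC v b) => vw.
  rewrite -[LHS]addr0; lra.
move/eqP; rewrite mulf_eq0 (negPf t0) /= addr_eq0 => /eqP ->.
by field.
Qed.

Lemma normal_cone_conv V v c :
  normal_cone (conv V) v c <-> forall u, u \in V -> dot c (u - v) <= 0.
Proof.
split => [Nc u uV | c_le y Vy]; first by rewrite dotBr subr_le0; apply/Nc/conv_of_mem.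
by apply: conv_dot_le Vy => u /c_le; rewrite dotBr subr_le0.
Qed.

Lemma normal_cone0 (P : vec -> Prop) v : normal_cone P v 0.
Proof. by move=> y _; rewrite !dot0l. Qed.

Lemma normal_coneD (P : vec -> Prop) v c c' :
  normal_cone P v c -> normal_cone P v c' -> normal_cone P v (c + c').
Proof. by move=> Nc Nc' y Py; rewrite !dotDl lerD ?Nc ?Nc'. Qed.

Lemma normal_cone_face_level (P : vec -> Prop) v c0 m a :
  (forall c, normal_cone P v c -> dot c0 c <= m) ->
  normal_cone P v a -> dot c0 a = m -> m = 0.
Proof.
move=> c0_le Na c0a; have := c0_le _ (@normal_cone0 P v).
have := c0_le _ (normal_coneD Na Na); rewrite dotDr c0a dot0r; lra.
Qed.

Lemma normal_cone_perturb V v c (xs : seq vec) :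
  (forall u, u \in V -> dot c (u - v) < 0 \/
     dot c (u - v) = 0 /\ forall x, x \in xs -> dot x (u - v) = 0) ->
  exists2 e, 0 < e & forall x, x \in xs -> normal_cone (conv V) v (c + e *: x).
Proof.
move=> Vu; pose strict := [seq p <- allpairs pair xs V | dot c (p.2 - v) < 0].
have strict_lt0 p : p \in strict -> dot c (p.2 - v) < 0.
  by rewrite mem_filter => /andP [].
have [e e_gt0 He] := small_perturbation (fun p => dot p.1 (p.2 - v)) strict_lt0.
exists e => // x xxs; apply/normal_cone_conv => u uV; rewrite dotDl dotZl.
have [lt | [-> xu]] := Vu u uV; last by rewrite xu // mulr0 addr0.
by apply/ltW/(He (x, u)); rewrite mem_filter lt allpairs_f.
Qed.

Lemma exists_generic_element (W : vec -> Prop) (ys : seq vec) :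
  W 0 -> (forall x y, W x -> W y -> W (x + y)) ->
  (forall c y, W c -> y \in ys -> dot c y <= 0) ->
  exists2 c, W c & forall y, y \in ys -> dot c y < 0 \/ forall c', W c' -> dot c' y = 0.
Proof.
move=> W0 WD; elim: ys => [|y ys IHys] W_le; first by exists 0.
have [c Wc c_gen] :=
  IHys (fun c' y' Wc' y'ys => W_le c' y' Wc' (mem_behead (s := y :: ys) y'ys)).
case: (classic (forall c', W c' -> dot c' y = 0)) => [y_tight | /not_all_ex_not [c']].
  by exists c => // y'; rewrite inE => /predU1P [->|/c_gen]; [right|].
move=> c'_not_tight; have [Wc' c'y] := imply_to_and _ _ c'_not_tight.
have c'y_lt0 : dot c' y < 0 by rewrite lt_neqAle W_le ?mem_head // andbT; apply/eqP.
exists (c + c'); first exact: WD.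
move=> y'; rewrite inE dotDl => /predU1P [->|y'ys].
  by left; have := W_le c y Wc (mem_head _ _); lra.
have [lt|] := c_gen y' y'ys; last by right.
by left; have := W_le c' y' Wc' (mem_behead (s := y :: ys) y'ys); lra.
Qed.

Section HyperplanePiece.
Variables (W : vec -> Prop) (a c : vec).
Hypotheses (a_neq0 : a != 0) (Wc : W c) (W_orth : forall x, W x -> dot a x = 0).
Hypothesis W_open : forall xs : seq vec, (forall x, x \in xs -> dot a x = 0) ->
  exists2 e, 0 < e & forall x, x \in xs -> W (c + e *: x).

Lemma lspan_hyperplane_piece x : lspan W x <-> dot a x = 0.
Proof.
split => [[s [Ws xs]] | ax]; first by apply: span_orth xs => y /Ws/W_orth.
have [e e_gt0 We] : exists2 e, 0 < e & forall y, y \in [:: x] -> W (c + e *: y).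
  by apply: W_open => y; rewrite inE => /eqP ->.
exists [:: c; c + e *: x]; split => [y|].
  by rewrite !inE => /predU1P [->|/eqP ->] //; apply: We; rewrite mem_head.
have xE : x = e^-1 *: ((c + e *: x) - c) by rewrite addrAC subrr add0r scalerK ?gt_eqF.
by rewrite {1}xE rpredZ // rpredB // memv_span ?mem_head // inE mem_head orbT.
Qed.

Lemma affdim_hyperplane_piece : affdim W d.-1.
Proof.
split => [|a0 s Wa0 Ws]; last first.
  rewrite /free => /eqP <-; rewrite -(dim_orthv a_neq0).
  apply/dimvS/span_subvP => x xs; rewrite memv_orth.
  by have := W_orth (Ws x xs); rewrite dotDr W_orth // add0r => ->.
exists c; split => //.
pose B := vbasis (orthv a).
have B_orth x : x \in (B : seq vec) -> dot a x = 0.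
  by move/vbasis_mem; rewrite memv_orth => /eqP.
have [e e_gt0 We] := W_open B_orth.
exists (map (fun x => e *: x) B); split; first by rewrite size_map size_tuple dim_orthv.
split; first by move=> _ /mapP [x xB ->]; apply: We.
rewrite /free span_scale ?size_map; last exact: lt0r_neq0.
by have := basis_free (vbasisP (orthv a)).
Qed.

End HyperplanePiece.

Section Edge.
Variables (V : seq vec) (v w c : vec) (m : R).
Hypotheses (w_neq_v : w != v) (c_le : forall y, conv V y -> dot c y <= m).
Hypothesis edgeE : forall x, conv [:: v; w] x <-> conv V x /\ dot c x = m.

Lemma edge_ends : [/\ conv V v, conv V w, dot c v = m & dot c w = m].
Proof.
have [Vv cv] := iffLR (edgeE v) (conv_of_mem (mem_head _ _)).
have [Vw cw] := iffLR (edgeE w) (conv_of_mem (mem_last _ [:: w])).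
by [].
Qed.

Lemma edge_dir : dot c (w - v) = 0.
Proof. by have [_ _ cv cw] := edge_ends; rewrite dotBr cv cw subrr. Qed.

Lemma edge_points u : u \in V ->
  dot c (u - v) < 0 \/ exists2 t, 0 <= t <= 1 & u - v = t *: (w - v).
Proof.
move=> uV; have [_ _ cv _] := edge_ends.
have := c_le (conv_of_mem uV); rewrite le_eqVlt => /predU1P [cu|].
  have /conv2P [t t01 ->] : conv [:: v; w] u.
    by apply/edgeE; split; [exact: conv_of_mem | rewrite cu].
  by right; exists t; rewrite // addrC addKr.
by left; rewrite dotBr subr_lt0 cv.
Qed.

Lemma edge_end_vertex : is_vertex (conv V) w.
Proof.
have [_ Vw _ _] := edge_ends.
apply: (vertex_of_ray (c := c) (b := w - v)) edge_dir _ => // u uV.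
have uwE : u - w = (u - v) - (w - v) by rewrite opprB addrA subrK.
have [lt | [t /andP [_ t_le1] uvE]] := edge_points uV.
  by left; rewrite uwE dotBr edge_dir subr0.
by right; exists (t - 1); rewrite ?subr_le0 // uwE uvE scalerBl scale1r.
Qed.

Lemma edge_wall (W := fun x => normal_cone (conv V) v x /\ dot (w - v) x = 0) :
  is_wall (normal_cone (conv V) v) W /\ forall x, lspan W x <-> dot (w - v) x = 0.
Proof.
have [_ Vw cv _] := edge_ends.
have wv_neq0 : w - v != 0 by rewrite subr_eq0.
have Wc : W c by split; [move=> y /c_le; rewrite cv | rewrite dotC edge_dir].
have W_open (xs : seq vec) : (forall x, x \in xs -> dot (w - v) x = 0) ->
    exists2 e, 0 < e & forall x, x \in xs -> W (c + e *: x).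
  move=> xs_orth; have [e e_gt0 Ne] : exists2 e, 0 < e &
      forall x, x \in xs -> normal_cone (conv V) v (c + e *: x).
    apply: normal_cone_perturb => u /edge_points [lt|[t _ ->]]; [by left | right].
    by split => [|x /xs_orth xw]; rewrite dotZr ?edge_dir ?(dotC x) ?xw mulr0.
  exists e => // x xxs; split; first exact: Ne.
  by rewrite dotDr dotZr (xs_orth _ xxs) mulr0 addr0 dotC edge_dir.
have W_orth x : W x -> dot (w - v) x = 0 by case.
split; first split.
- exists (w - v), 0; split => [y Ny | //].
  by rewrite dotC dotBr subr_le0 Ny.
- exists d.-1; split; last by rewrite prednK ?(rV_neq0_dim_gt0 wv_neq0).
  exact: affdim_hyperplane_piece wv_neq0 Wc W_orth W_open.
- exact: lspan_hyperplane_piece Wc W_orth W_open.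
Qed.

End Edge.

Lemma neighbor_wall_refl V v w :
  inscribed (conv V) -> is_vertex (conv V) v -> neighbor (conv V) v w ->
  exists W : vec -> Prop, is_wall (normal_cone (conv V) v) W /\
    exists alpha, alpha != 0 /\ (forall x, lspan W x <-> dot alpha x = 0) /\
      w = refl alpha v.
Proof.
move=> [r [_ on_sphere]] v_vertex [/eqP w_neq_v [c [m [c_le edgeE]]]].
have [W_wall W_span] := edge_wall w_neq_v c_le edgeE.
have w_vertex := edge_end_vertex c_le edgeE.
eexists; split; first exact: W_wall.
exists (w - v); split; first by rewrite subr_eq0.
split => //; apply/esym/(refl_sphere (t := 1)); rewrite ?scale1r ?oner_neq0 //.
by rewrite !on_sphere.
Qed.

Section LineFace.
Variables (V : seq vec) (v c b : vec).
Hypotheses (v_vertex : is_vertex (conv V) v) (c_normal : normal_cone (conv V) v c).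
Hypotheses (b_neq0 : b != 0) (cb : dot c b = 0).
Hypothesis line : forall u, u \in V -> dot c (u - v) = 0 -> exists t, u - v = t *: b.

Lemma line_face_far_end u1 :
  u1 \in V -> dot c (u1 - v) = 0 -> 0 < dot b (u1 - v) ->
  exists u0 (T : R), [/\ u0 \in V, u0 - v = T *: b, 0 < T &
    forall u, u \in V -> dot c (u - v) = 0 -> exists2 t, 0 <= t <= T & u - v = t *: b].
Proof.
move=> u1V cu1 bu1; pose idx u (uV : u \in V) := Ordinal (etrans (index_mem u V) uV).
pose tight := [pred i : 'I_(size V) | dot c (V`_i - v) == 0].
have tight_idx u uV : dot c (u - v) = 0 -> tight (idx u uV) by rewrite /= nth_index // => ->.
case: (arg_maxP (fun i : 'I_(size V) => dot b (V`_i - v)) (tight_idx u1 u1V cu1)).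
move=> i0 /eqP cu0 u0_max.
have u0V : V`_i0 \in V by apply: mem_nth.
have b_le u : u \in V -> dot c (u - v) = 0 -> dot b (u - v) <= dot b (V`_i0 - v).
  by move=> uV cu; have := u0_max _ (tight_idx u uV cu); rewrite /= nth_index.
have bb_gt0 : 0 < dot b b by rewrite dot_gt0.
have [T u0E] := line u0V cu0.
have T_gt0 : 0 < T.
  by rewrite -(pmulr_lgt0 _ bb_gt0) -dotZr -u0E (lt_le_trans bu1) ?b_le.
exists V`_i0, T; split => // u uV cu; have [t uE] := line uV cu.
exists t => //; apply/andP; split.
  rewrite leNgt; apply/negP => t_lt0; apply: (negP b_neq0); apply/eqP.
  apply: (vertex_not_inner v_vertex _ _ t_lt0 T_gt0);
    by rewrite -?uE -?u0E addrC subrK; apply: conv_of_mem.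
by rewrite -(ler_pM2r bb_gt0) -!dotZr -uE -u0E b_le.
Qed.

Lemma line_face_neighbor u0 T :
  inscribed (conv V) -> u0 \in V -> u0 - v = T *: b -> 0 < T ->
  (forall u, u \in V -> dot c (u - v) = 0 -> exists2 t, 0 <= t <= T & u - v = t *: b) ->
  neighbor (conv V) v (refl b v).
Proof.
move=> [r [_ on_sphere]] u0V u0E T_gt0 ray.
have c_le u : u \in V -> dot c (u - v) <= 0 by apply: (iffLR (normal_cone_conv _ _ _)).
have cu0 : dot c (u0 - v) = 0 by rewrite u0E dotZr cb mulr0.
have u0_vertex : is_vertex (conv V) u0.
  apply: (vertex_of_ray (conv_of_mem u0V) cb) => u uV.
  have uu0E : u - u0 = (u - v) - (u0 - v) by rewrite opprB addrA subrK.
  have := c_le u uV; rewrite le_eqVlt => /predU1P [cu | lt]; [right | left].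
    have [t /andP [_ t_le] uE] := ray u uV cu.
    by exists (t - T); rewrite ?subr_le0 // uu0E uE u0E scalerBl.
  by rewrite uu0E dotBr cu0 subr0.
have -> : refl b v = u0.
  by apply: (refl_sphere (t := T)); rewrite ?on_sphere ?gt_eqF // vertex_mem.
split.
  move=> u0v; move: u0E; rewrite u0v subrr => /esym/eqP.
  by rewrite scaler_eq0 gt_eqF ?(negPf b_neq0).
apply: (face_segment (c := c)).
- exact: vertex_mem.
- exact: conv_of_mem.
- by move=> u uV; rewrite -subr_le0 -dotBr c_le.
- by apply/eqP; rewrite -subr_eq0 -dotBr cu0.
move=> u uV cu; have cuv : dot c (u - v) = 0 by rewrite dotBr cu subrr.
have [t /andP [t_ge0 t_le] uE] := ray u uV cuv.
apply/conv2P.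
exists (t / T); first by rewrite divr_ge0 ?(ltW T_gt0) //= ler_pdivrMr // mul1r.
by rewrite u0E scalerA divfK ?gt_eqF // -uE addrC subrK.
Qed.

End LineFace.

Section Wall.
Variables (V : seq vec) (v c0 al : vec) (W : vec -> Prop).
Hypothesis c0_le : forall c, normal_cone (conv V) v c -> dot c0 c <= 0.
Hypothesis WE : forall c, W c <-> normal_cone (conv V) v c /\ dot c0 c = 0.
Hypotheses (al_neq0 : al != 0) (W_span : forall x, lspan W x <-> dot al x = 0).

Lemma wall_orth c : W c -> dot al c = 0.
Proof.
move=> Wc; apply/W_span; exists [:: c].
by split; [move=> y /[1!inE] /eqP -> | exact: memv_span1].
Qed.

Lemma wall_generic : exists2 c, W c &
  forall u, u \in V -> dot c (u - v) < 0 \/ exists t, u - v = t *: al.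
Proof.
have W0 : W 0 by apply/WE; rewrite dot0r; split; first exact: normal_cone0.
have WD x y : W x -> W y -> W (x + y).
  move=> /WE [Nx c0x] /WE [Ny c0y]; apply/WE.
  by rewrite dotDr c0x c0y addr0; split; first exact: normal_coneD.
have W_le c y : W c -> y \in [seq u - v | u <- V] -> dot c y <= 0.
  by move=> /WE [Nc _] /mapP [u uV ->]; apply: (iffLR (normal_cone_conv _ _ _) Nc).
have [c Wc c_gen] := exists_generic_element W0 WD W_le.
exists c => // u uV.
have [lt | tight] := c_gen _ (map_f (fun u => u - v) uV); [by left | right].
exists (dot al (u - v) / dot al al); apply: orth_orth_colinear al_neq0 _ => y.
move=> /W_span [s [Ws ys]]; apply: span_orth ys => z /Ws Wz.
by rewrite dotC tight.
Qed.

Lemma wall_tight_direction c : W c ->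
  exists2 u1, u1 \in V & dot c (u1 - v) = 0 /\ dot al (u1 - v) != 0.
Proof.
move=> Wc; apply: NNPP => no_u1.
have [Nc c0c] := iffLR (WE c) Wc.
have [e e_gt0 Ne] : exists2 e, 0 < e &
    forall x, x \in [:: al; - al] -> normal_cone (conv V) v (c + e *: x).
  apply: normal_cone_perturb => u uV.
  have := iffLR (normal_cone_conv _ _ _) Nc u uV.
  rewrite le_eqVlt => /predU1P [cu|]; [right | by left].
  have al_u : dot al (u - v) = 0 by apply/eqP/negPn/negP => al_u; apply: no_u1; exists u.
  by split => // x; rewrite !inE => /predU1P [->|/eqP ->]; rewrite ?dotNl al_u ?oppr0.
have c0al : dot c0 al = 0.
  have := c0_le (Ne _ (mem_head _ _)); have := c0_le (Ne (- al) (mem_last _ [:: - al])).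
  rewrite !dotDr !dotZr dotNr c0c !add0r mulrN oppr_le0 => h1 h2.
  by apply/eqP; rewrite eq_le -(pmulr_rle0 _ e_gt0) h2 -(pmulr_rge0 _ e_gt0) h1.
have /wall_orth : W (c + e *: al).
  apply/WE; rewrite dotDr dotZr c0c c0al mulr0 addr0.
  by split => //; apply: Ne; rewrite mem_head.
rewrite dotDr dotZr wall_orth // add0r => /eqP; rewrite mulf_eq0 gt_eqF //=.
by rewrite dot_eq0 (negPf al_neq0).
Qed.

End Wall.

Lemma wall_refl_neighbor V v (W : vec -> Prop) (al : vec) :
  inscribed (conv V) -> is_vertex (conv V) v -> is_wall (normal_cone (conv V) v) W ->
  al != 0 -> (forall x, lspan W x <-> dot al x = 0) -> neighbor (conv V) v (refl al v).
Proof.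
move=> insc v_vertex [[c0 [m [c0_le WE]]] [k [[[a0 [Wa0 _]] _] _]]] al_neq0 W_span.
have [Na0 c0a0] := iffLR (WE a0) Wa0.
have m0 := normal_cone_face_level c0_le Na0 c0a0; rewrite {}m0 in c0_le WE.
have [c Wc c_gen] := wall_generic WE al_neq0 W_span.
have [u1 u1V [cu1 al_u1]] := wall_tight_direction c0_le WE al_neq0 W_span Wc.
have [Nc _] := iffLR (WE c) Wc.
have c_al : dot c al = 0 by rewrite dotC (wall_orth W_span Wc).
have line u : u \in V -> dot c (u - v) = 0 -> exists t, u - v = t *: al.
  by move=> uV cu; have [|//] := c_gen u uV; rewrite cu ltxx.
suff neighbor_dir (b : vec) : b != 0 -> dot c b = 0 ->
    (forall u, u \in V -> dot c (u - v) = 0 -> exists t, u - v = t *: b) ->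
    0 < dot b (u1 - v) -> neighbor (conv V) v (refl b v).
  have [al_u1_gt0|al_u1_le0] := ltrP 0 (dot al (u1 - v)); first exact: neighbor_dir.
  rewrite -reflN; apply: neighbor_dir; rewrite ?oppr_eq0 ?dotNr ?c_al ?oppr0 //.
    by move=> u uV /(line u uV) [t ->]; exists (- t); rewrite scaleNr scalerN opprK.
  by rewrite dotNl oppr_gt0 lt_neqAle al_u1.
move=> b_neq0 c_b line_b b_u1.
have [u0 [T [u0V u0E T_gt0 ray]]] := line_face_far_end v_vertex b_neq0 line_b u1V cu1 b_u1.
exact (line_face_neighbor v_vertex Nc b_neq0 c_b insc u0V u0E T_gt0 ray).
Qed.

End InscribedPolytope.

Theorem corollary2p3 (R : realFieldType) (d : nat) (V : seq 'rV[R]_d)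
    (v : 'rV[R]_d) :
  inscribed (conv V) -> is_vertex (conv V) v ->
  forall w : 'rV[R]_d,
    neighbor (conv V) v w <->
    exists W : 'rV[R]_d -> Prop,
      is_wall (normal_cone (conv V) v) W /\
      exists alpha : 'rV[R]_d,
        alpha != 0 /\ (forall x, lspan W x <-> dot alpha x = 0) /\
        w = refl alpha v.
Proof.
move=> insc v_vertex w; split; first exact: neighbor_wall_refl.
move=> [W [W_wall [alpha [alpha_neq0 [W_span ->]]]]].
exact: wall_refl_neighbor W_wall alpha_neq0 W_span.
Qed.
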